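(* Let $(K_i)_{i\in I}$ be a family of nonempty compact Hausdorff spaces each having the regular extension property, and let $K$ be the Alexandroff compactification of their topological sum $\bigsqcup_{i\in I}K_i$. Then $K$ has the regular extension property. (That is, the class of compact Hausdorff spaces with the regular extension property is closed under taking Alexandroff compactifications of arbitrary topological sums.)
   Context: The Alexandroff compactification of a locally compact Hausdorff space $X$ is $X$ itself if $X$ is compact, and its one-point compactification $X\cup\{\infty\}$ otherwise. $C(K)$ is the Banach space of real-valued continuous functions on $K$ with the supremum norm and $\mathbf 1_K$ its unit. For a closed $F\subseteq K$, an extension operator for $F$ in $K$ is a bounded linear map $E:C(F)\to C(K)$ with $E(f)|_F=f$ for all $f$; it is regular if $\|E\|\le 1$ and $E(\mathbf 1_F)=\mathbf 1_K$. $K$ has the regular extension property if every nonempty closed subset admits a regular extension operator in $K$. *)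

From HB Require Import structures.
From mathcomp Require Import all_boot all_order all_algebra.
From mathcomp Require Import all_classical all_reals.
From mathcomp Require Import all_analysis topology_theory.sigT_topology
  topology_theory.subtype_topology topology_theory.one_point_compactification.

Set Implicit Arguments.
Unset Strict Implicit.
Unset Printing Implicit Defensive.
Import Order.TTheory GRing.Theory Num.Theory.
Local Open Scope classical_set_scope.
Local Open Scope ring_scope.

(* C(F) is represented by the continuous real functions on the subspace type
   [set_type F] (notation: F coerced to a type, with the initial = subspace
   topology); C(K) by continuous functions K -> R.  An extension operator is
   given by a map E on functions; only its values on continuous functions
   matter. *)
Definition regular_extension_operator (R : realType) (K : topologicalType)
    (F : set K) (E : (set_type F -> R) -> (K -> R)) : Prop :=
  (forall f : set_type F -> R, continuous (f : set_type F -> R^o) -> continuous (E f : K -> R^o)) /\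
  (forall (a : R) (f g : set_type F -> R), continuous (f : set_type F -> R^o) -> continuous (g : set_type F -> R^o) ->
     E (fun y => a * f y + g y) = (fun x => a * E f x + E g x)) /\
  (forall f : set_type F -> R, continuous (f : set_type F -> R^o) -> forall y : set_type F, E f (set_val y) = f y) /\
  (forall f : set_type F -> R, continuous (f : set_type F -> R^o) -> forall M : R,
     (forall y : set_type F, `|f y| <= M) -> forall x : K, `|E f x| <= M) /\
  E (fun _ => 1) = (fun _ => 1).

Definition has_regular_extension_property (R : realType) (K : topologicalType)
  : Prop :=
  forall F : set K, closed F -> F !=set0 ->
    exists E : (set_type F -> R) -> (K -> R), regular_extension_operator E.

(* The Alexandroff compactification of X is X if X is compact and the
   one-point compactification otherwise; "P holds of the Alexandroff
   compactification of X" is expressed by the case split. *)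
Definition alexandroff_has (X : topologicalType)
    (P : topologicalType -> Prop) : Prop :=
  (compact [set: X] -> P X) /\
  (~ compact [set: X] -> P (one_point_compactification X)).

From HB Require Import structures.
From mathcomp Require Import all_boot all_order all_algebra.
From mathcomp Require Import all_classical all_reals.
From mathcomp Require Import all_analysis topology_theory.sigT_topology
  topology_theory.subtype_topology topology_theory.one_point_compactification.
From mathcomp Require Import finmap lra.
Import Order.TTheory GRing.Theory Num.Theory.
Local Open Scope classical_set_scope.
Local Open Scope ring_scope.

(* A closed set F of the sum X = ⊔ K_i meets each summand in a closed trace F_i.
   Extending f|F_i by a regular operator of K_i on every summand with nonempty
   trace, and by the constant f(p0) on the others, gives a regular extension
   operator of X.  For the one-point compactification, send ∞ to f(p0), where
   p0 = ∞ if ∞ ∈ F.  Continuity at ∞ holds because a compact set of X meets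
   only finitely many summands: off those, either F_i is empty, or F_i lies in
   a small neighbourhood of ∞ where f is close to f(∞), and a regular
   operator maps functions with values in [d - e, d + e] to such functions. *)

Lemma regular_extension_operator_dist_le (R : realType) (T : topologicalType)
    (F : set T) (E : (set_type F -> R) -> T -> R) :
  regular_extension_operator E ->
  forall f : set_type F -> R, continuous (f : set_type F -> R^o) ->
  forall d e, (forall y, `|f y - d| <= e) -> forall x, `|E f x - d| <= e.
Proof.
move=> [_ [El [_ [Eb E1]]]] f cf d e fde x.
have c1 : continuous ((fun=> 1) : set_type F -> R^o).
  by move=> y; exact: cst_continuous.
have := El (- d) _ _ c1 cf; rewrite E1 => /(congr1 (fun g => g x)) /= Edx.
have -> : E f x - d = - d * 1 + E f x by rewrite mulr1 addrC.
rewrite -Edx; apply: Eb => [y|y]; last by rewrite mulr1 addrC.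
exact: (cvgD (cvg_cst _) (cf y)).
Qed.

(* [compact_cover] is stated for pointed spaces; a nonempty set points its
   ambient space. *)
Definition pointed_at {T : topologicalType} (x : T) : Type := T.
HB.instance Definition _ (T : topologicalType) (x : T) :=
  Topological.copy (pointed_at x) T.
HB.instance Definition _ (T : topologicalType) (x : T) :=
  isPointed.Build (pointed_at x) x.

Lemma compact_cover_compact (T : topologicalType) (A : set T) :
  compact A -> cover_compact A.
Proof.
move=> cA I D f fo cov.
have [->|/set0P [x0 _]] := eqVneq A set0.
  by exists fset0 => [?|? []]; rewrite ?inE.
move: cA; rewrite -[compact A]/(@compact (pointed_at x0) A) compact_cover.
by apply.
Qed.

Section sigT_summands.
Context {I : choiceType} {K : I -> topologicalType}.
Local Notation X := {i : I & K i}.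

Definition summand (i : I) : set X := existT K i @` setT.

Lemma compact_summand i : compact [set: K i] -> compact (summand i).
Proof.
move=> cK; apply: continuous_compact => //.
exact/continuous_subspaceT/existT_continuous.
Qed.

Lemma closed_summand i : closed (summand i).
Proof.
rewrite -[summand i]setCK closedC sigT_openP => k.
have [->|nki] := eqVneq k i.
  rewrite (_ : _ @^-1` _ = set0); first exact: open0.
  by apply/seteqP; split => // w /=; apply; exists w.
rewrite (_ : _ @^-1` _ = setT); first exact: openT.
apply/seteqP; split => // w _ /= [v _ /(congr1 (@projT1 _ _))/= eki].
by move: nki; rewrite eki eqxx.
Qed.

Lemma compact_sigT_saturation {C : set X} :
  (forall i, compact [set: K i]) -> compact C ->
  exists2 C' : set X, (compact `&` closed) C' &
    forall i w w', C (existT K i w) -> C' (existT K i w').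
Proof.
move=> cK /compact_cover_compact cC.
have [D _ cov] : finite_subset_cover setT summand C.
  apply: cC => [i _|[i w] _]; first exact: existT_open_map openT.
  by exists i => //; exists w.
exists (\big[setU/set0]_(i <- D) summand i); first split.
- by apply: bigsetU_compact => i _; exact: compact_summand.
- by apply: closed_bigsetU => i _; exact: closed_summand.
move=> i w w' /cov [k Dk [v _ /(congr1 (@projT1 _ _))/= eki]].
by rewrite -bigcup_fset; exists i; [rewrite /= -eki | exists w'].
Qed.

Lemma near_infty_summand_disjoint {C : set X} :
  (forall i, compact [set: K i]) -> compact C ->
  \forall t \near (None : one_point_compactification X),
    forall x, t = Some x -> forall w, ~ C (existT K (projT1 x) w).
Proof.
move=> cK cC; have [C' cC' satC] := compact_sigT_saturation cK cC.
exists C' => // t [[[i z] nC'z <-]|->] // _ [<-] w Cw.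
exact/nC'z/(satC _ _ _ Cw).
Qed.

End sigT_summands.

Section glued_extension.
Context {R : realType} {I : choiceType} {K : I -> topologicalType}.
Local Notation X := {i : I & K i}.
Context {P : topologicalType} (j : X -> P) (F : set P).
Hypotheses (cj : continuous j) (cF : closed F).
Hypothesis Krep : forall i, has_regular_extension_property R (K i).

Definition summand_trace (i : I) : set (K i) := (j \o existT K i) @^-1` F.

Definition summand_trace_val i (z : set_type (summand_trace i)) : set_type F :=
  exist _ (j (existT K i (set_val z))) (svalP z).

Lemma closed_summand_trace i : closed (summand_trace i).
Proof.
apply: preimage_closed => // z _; apply: continuous_comp; last exact: cj.
exact: existT_continuous.
Qed.

Lemma continuous_comp_summand_trace_val i {f : set_type F -> R} :
  continuous (f : set_type F -> R^o) ->
  continuous ((f \o summand_trace_val i) : _ -> R^o).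
Proof.
move=> cf z; apply: continuous_comp; last exact: cf.
apply: (@continuous_comp_initial _ _ _ set_val).
have -> : set_val \o summand_trace_val i = j \o existT K i \o set_val by [].
move=> w; apply: continuous_comp; last exact: cj.
exact: (@initial_continuous _ _ set_val).
Qed.

Definition summand_extension {i} (ne : summand_trace i !=set0) :=
  projT1 (cid (Krep i _ (closed_summand_trace i) ne)).

Lemma summand_extensionP {i} (ne : summand_trace i !=set0) :
  regular_extension_operator (summand_extension ne).
Proof. exact: projT2 (cid _). Qed.

Variable p0 : set_type F.

Definition glued_summand (f : set_type F -> R) i : K i -> R :=
  match pselect (summand_trace i !=set0) with
  | left ne => summand_extension ne (f \o summand_trace_val i)
  | right _ => cst (f p0)
  end.

Definition glued_extension (f : set_type F -> R) (x : X) : R :=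
  glued_summand f (projT1 x) (projT2 x).

Lemma glued_extension_continuous f : continuous (f : set_type F -> R^o) ->
  continuous (glued_extension f : X -> R^o).
Proof.
move=> cf; apply: (@sigT_continuous _ _ R^o (glued_summand f)) => i.
rewrite /glued_summand; case: pselect => [ne|_].
  by apply: (summand_extensionP ne).1; exact: continuous_comp_summand_trace_val.
exact: cst_continuous.
Qed.

Lemma glued_extension_linear (a : R) f g :
  continuous (f : set_type F -> R^o) -> continuous (g : set_type F -> R^o) ->
  glued_extension (fun y => a * f y + g y) =
  (fun x => a * glued_extension f x + glued_extension g x).
Proof.
move=> cf cg; apply/funext => -[i z].
rewrite /glued_extension /glued_summand /=.
case: pselect => [ne|_] //.
have [_ [El _]] := summand_extensionP ne.
have := El a _ _ (continuous_comp_summand_trace_val i cf)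
  (continuous_comp_summand_trace_val i cg).
by move/(congr1 (fun h => h z)).
Qed.

Lemma glued_extension_extends f (y : set_type F) i z :
  continuous (f : set_type F -> R^o) ->
  set_val y = j (existT K i z) -> glued_extension f (existT K i z) = f y.
Proof.
move=> cf yE; have Fz : summand_trace i z.
  by rewrite /summand_trace /= -yE; exact: set_valP.
rewrite /glued_extension /glued_summand /=.
case: pselect => [ne|[]]; last by exists z.
have [_ [_ [Ee _]]] := summand_extensionP ne.
rewrite (Ee _ (continuous_comp_summand_trace_val i cf) (exist _ z (mem_set Fz))).
by congr f; apply: val_inj; rewrite /= -yE.
Qed.

Lemma glued_extension_norm_le f : continuous (f : set_type F -> R^o) ->
  forall M, (forall y, `|f y| <= M) -> forall x, `|glued_extension f x| <= M.
Proof.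
move=> cf M fM [i z]; rewrite /glued_extension /glued_summand /=.
case: pselect => [ne|_]; last exact: fM.
have [_ [_ [_ [Eb _]]]] := summand_extensionP ne.
by apply: (Eb _ (continuous_comp_summand_trace_val i cf) M _ z) => w; exact: fM.
Qed.

Lemma glued_extension1 : glued_extension (fun=> 1) = (fun=> 1).
Proof.
apply/funext => -[i z]; rewrite /glued_extension /glued_summand /=.
case: pselect => [ne|_] //.
by rewrite (summand_extensionP ne).2.2.2.2.
Qed.

Lemma glued_extension_dist_le f e i z : continuous (f : set_type F -> R^o) ->
  0 <= e -> (forall w, `|f (summand_trace_val i w) - f p0| <= e) ->
  `|glued_extension f (existT K i z) - f p0| <= e.
Proof.
move=> cf e0 fe; rewrite /glued_extension /glued_summand /=.
case: pselect => [ne|_]; last by rewrite subrr normr0.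
exact: regular_extension_operator_dist_le (summand_extensionP ne) _
  (continuous_comp_summand_trace_val i cf) _ _ fe _.
Qed.

End glued_extension.

Lemma sigT_regular_extension_property (R : realType) (I : choiceType)
    (K : I -> topologicalType) :
  (forall i, has_regular_extension_property R (K i)) ->
  has_regular_extension_property R {i : I & K i}.
Proof.
move=> Krep F cF [x0 Fx0]; pose p0 : set_type F := exist _ x0 (mem_set Fx0).
have cont_id : continuous (@id {i : I & K i}) by move=> x U.
exists (glued_extension id F cont_id cF Krep p0).
split; [|split; [|split; [|split]]].
- exact: glued_extension_continuous.
- exact: glued_extension_linear.
- by move=> f cf [[i z] Fz]; apply: glued_extension_extends.
- exact: glued_extension_norm_le.
- exact: glued_extension1.
Qed.

Section one_point_sigT.
Context {R : realType} {I : choiceType} {K : I -> topologicalType}.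
Local Notation X := {i : I & K i}.
Local Notation opc := (one_point_compactification X).
Hypothesis Kcpt : forall i, compact [set: K i].
Hypothesis Krep : forall i, has_regular_extension_property R (K i).
Context (F : set opc) (cF : closed F) (p0 : set_type F).
Hypothesis p0N : F None -> set_val p0 = None.

Local Notation glued := (glued_extension (Some : X -> opc) F
  one_point_compactification_some_continuous cF Krep p0).

Definition infty_extension (f : set_type F -> R) (t : opc) : R :=
  if t is Some x then glued f x else f p0.

Lemma compact_complement_dist_lt f e :
  continuous (f : set_type F -> R^o) -> 0 < e ->
  exists2 C : set X, compact C &
    forall x (y : set_type F), ~ C x -> set_val y = Some x -> `|f p0 - f y| < e.
Proof.
move=> cf e0; have [FN|nFN] := pselect (F None).
- have /(@cvgrPdist_lt _ _ _ _ (nbhs_filter p0)) /(_ _ e0) := cf p0.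
  rewrite nbhsE => -[B [[A oA AB] Bp0] Bf].
  have AN : A None by rewrite -(p0N FN) -[A _]/((set_val @^-1` A) p0) AB.
  have [C [cC _] CA] : nbhs (None : opc) A by exact: open_nbhs_nbhs.
  exists C => // x y nCx yE; apply: Bf; rewrite -AB /= yE.
  by apply: CA; left; exists x.
- have [C [cC _] CA] : nbhs (None : opc) (~` F).
    by apply: open_nbhs_nbhs; split => //; exact: closed_openC.
  exists C => // x y nCx yE; exfalso.
  by apply: (CA (Some x)); [left; exists x | rewrite -yE; exact: set_valP].
Qed.

Lemma infty_extension_continuous f : continuous (f : set_type F -> R^o) ->
  continuous (infty_extension f : opc -> R^o).
Proof.
move=> cf [x|]; first exact: glued_extension_continuous.
apply/(@cvgrPdist_lt _ _ _ _ (nbhs_filter (None : opc))) => e e0.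
have e20 : 0 < e / 2 by rewrite divr_gt0.
have [C cC Cf] := compact_complement_dist_lt f _ cf e20.
apply: filterS (near_infty_summand_disjoint Kcpt cC) => -[[i z] off|_] /=;
  last by rewrite subrr normr0.
rewrite distrC; apply: le_lt_trans (_ : e / 2 < e); last by lra.
apply: glued_extension_dist_le => [//||w]; first exact: ltW.
rewrite distrC.
by apply/ltW/(Cf (existT K i (set_val w))) => //; exact: (off _ erefl).
Qed.

Lemma infty_extension_regular : regular_extension_operator infty_extension.
Proof.
split; [|split; [|split; [|split]]].
- exact: infty_extension_continuous.
- move=> a f g cf cg; apply/funext => -[x|] //=.
  by rewrite glued_extension_linear.
- move=> f cf y; case yE : (set_val y) => [[i z]|] /=.
    exact: glued_extension_extends.
  congr f; apply: val_inj; rewrite -[val y]/(set_val y) yE.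
  by apply: p0N; rewrite -yE; exact: set_valP.
- move=> f cf M fM [x|]; last exact: fM.
  exact: glued_extension_norm_le cf M fM x.
- by apply/funext => -[x|] //=; rewrite glued_extension1.
Qed.

End one_point_sigT.

Lemma one_point_sigT_regular_extension_property (R : realType) (I : choiceType)
    (K : I -> topologicalType) :
  (forall i, compact [set: K i]) ->
  (forall i, has_regular_extension_property R (K i)) ->
  has_regular_extension_property R (one_point_compactification {i : I & K i}).
Proof.
move=> Kcpt Krep F cF [x0 Fx0].
have [p0 p0N] : exists p0 : set_type F, F None -> set_val p0 = None.
  have [FN|nFN] := pselect (F None); first by exists (exist _ None (mem_set FN)).
  by exists (exist _ x0 (mem_set Fx0)) => /nFN.
exists (infty_extension Krep F cF p0).
exact: infty_extension_regular Kcpt Krep F cF p0 p0N.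
Qed.

Theorem proposition3p12 (R : realType) (I : choiceType)
  (K : I -> topologicalType)
  (Kne : forall i, [set: K i] !=set0)
  (Kcpt : forall i, compact [set: K i])
  (Khaus : forall i, hausdorff_space (K i))
  (Krep : forall i, has_regular_extension_property R (K i)) :
  alexandroff_has {i : I & K i} (has_regular_extension_property R).
Proof.
split=> _; first exact: sigT_regular_extension_property.
exact: one_point_sigT_regular_extension_property.
Qed.
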